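(* Let $\alpha,\beta\in[0,1)$ and $\mathcal E(\alpha,\beta)=\{x\in\mathbb R:\mathcal D(\beta,x)=0\text{ or }\Psi(\alpha,\beta,x)=0\}$. Then $\mathcal E(\alpha,\beta)$ consists exactly of the three zeros of $\mathcal D(\beta,\cdot)$ together with: the value $\frac32$ if $\alpha=0$; the value $\frac12$ if $\alpha=\frac12$; and the value $1+\frac12\cos(2\pi\alpha)$ if $3\alpha+\beta\equiv\frac12\pmod 1$.
   Context: $\mathcal D(\beta,\lambda)=-\lambda^3+3\lambda^2-\frac{45}{16}\lambda+\frac{13}{16}-\frac1{32}\cos2\pi\beta$; $\Psi(\alpha,\beta,\lambda)=(1-\lambda)^2-\frac1{16}+\frac{1-\lambda}{4}(2e^{-2\pi i\alpha}+e^{-2\pi i(2\alpha+\beta)})+\frac1{16}(e^{-4\pi i\alpha}+2e^{-2\pi i(\alpha+\beta)})$. *)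

From Stdlib Require Import Reals Lra.
From Coquelicot Require Import Coquelicot.
Open Scope R_scope.

Definition Dfun (beta lam : R) : R :=
  - lam ^ 3 + 3 * lam ^ 2 - 45 / 16 * lam + 13 / 16 - 1 / 32 * cos (2 * PI * beta).

Definition cexpi (theta : R) : C := (cos theta, sin theta).

Definition Psi (alpha beta lam : R) : C :=
  (RtoC ((1 - lam) ^ 2 - 1 / 16)
   + RtoC ((1 - lam) / 4)
       * (RtoC 2 * cexpi (- 2 * PI * alpha)
          + cexpi (- 2 * PI * (2 * alpha + beta)))
   + RtoC (1 / 16)
       * (cexpi (- 4 * PI * alpha)
          + RtoC 2 * cexpi (- 2 * PI * (alpha + beta))))%C.

Definition Eset (alpha beta : R) (x : R) : Prop :=
  Dfun beta x = 0 \/ Psi alpha beta x = RtoC 0.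

From Stdlib Require Import Reals ZArith Lra Lia.
From Coquelicot Require Import Coquelicot.
Open Scope R_scope.

(* Put z = e^{-2 pi i alpha}, w = e^{-2 pi i beta} and v = 4 (1 - x), so that
   16 Psi = P + Q with P = (v + z)^2 - 1 and Q = w z (v z + 2).  For real v and
   unimodular z, w one has |P|^2 - |Q|^2 = (v^2 - 1) (v + 2 Re z)^2, so a real
   zero of Psi has v = 1, v = -1 or v = -2 Re z.  There 16 Psi factors as
   z (z + 2) (1 + w), z (z - 2) (1 - w) and (1 - z^2) (1 + z^3 w) / z^2: the first
   two vanish only for w = -1 and w = 1, where x = 3/4 resp. x = 5/4 is a zero
   of D, and the last one gives z^2 = 1 (alpha = 0 or 1/2) or z^3 w = -1
   (3 alpha + beta = 1/2 mod 1).  The zeros of D come from the Chebyshev identity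
   cos 3t = 4 cos^3 t - 3 cos t, since D(beta, x) = -(4 t^3 - 3 t + cos 2 pi beta) / 32
   for t = 2 (x - 1). *)

Lemma Cmult_integral (u v : C) : (u * v)%C = 0 -> u = 0 \/ v = 0.
Proof.
  intro H. destruct (Ceq_dec u 0) as [Hu|Hu]; [now left|right].
  replace v with (/ u * (u * v))%C by (field; exact Hu).
  rewrite H. apply Cmult_0_r.
Qed.

Lemma Cmult_eq_0_r (u v : C) : u <> 0 -> (u * v)%C = 0 -> v = 0.
Proof. intros Hu H. destruct (Cmult_integral u v H); [contradiction | assumption]. Qed.

Lemma cexpi_add (s t : R) : cexpi (s + t) = (cexpi s * cexpi t)%C.
Proof. unfold cexpi, Cmult; simpl. rewrite cos_plus, sin_plus. f_equal; ring. Qed.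

Lemma cexpi_neq_0 (t : R) : cexpi t <> 0.
Proof.
  intro H. injection H as Hc Hs. pose proof (sin2_cos2 t) as E.
  rewrite Hc, Hs in E. unfold Rsqr in E. lra.
Qed.

Lemma cexpi_opp (t : R) : cexpi (- t) = (/ cexpi t)%C.
Proof.
  transitivity (cexpi (- t) * cexpi t * / cexpi t)%C.
  { field. apply cexpi_neq_0. }
  rewrite <- cexpi_add, Rplus_opp_l. unfold cexpi at 1. rewrite cos_0, sin_0.
  apply Cmult_1_l.
Qed.

Lemma cexpi_conj (t : R) : Cconj (cexpi t) = (/ cexpi t)%C.
Proof. rewrite <- cexpi_opp. unfold cexpi, Cconj; simpl. now rewrite cos_neg, sin_neg. Qed.

Lemma cexpi_add_inv (t : R) : (cexpi t + / cexpi t)%C = RtoC (2 * cos t).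
Proof.
  rewrite <- cexpi_opp. unfold cexpi, Cplus, RtoC; simpl.
  rewrite cos_neg, sin_neg. f_equal; ring.
Qed.

Lemma cexpi_eq_1 (t : R) : cexpi t = 1 <-> cos t = 1.
Proof.
  split; [intro H; now injection H|].
  intro Hc. pose proof (sin2_cos2 t) as E. rewrite Hc in E. unfold Rsqr in E.
  unfold cexpi, RtoC. rewrite Hc. f_equal. nra.
Qed.

Lemma cexpi_eq_m1 (t : R) : cexpi t = (- 1)%C <-> cos t = -1.
Proof.
  split; [intro H; injection H; lra|].
  intro Hc. pose proof (sin2_cos2 t) as E. rewrite Hc in E. unfold Rsqr in E.
  unfold cexpi, Copp, RtoC. simpl. rewrite Hc. f_equal; nra.
Qed.

Lemma cos_2PI_eq_1 (s : R) : cos (2 * PI * s) = 1 <-> exists k : Z, s = IZR k.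
Proof.
  pose proof PI_RGT_0 as HPI.
  split.
  - intro H. assert (Hs : sin (PI * s) = 0).
    { replace (2 * PI * s) with (2 * (PI * s)) in H by ring.
      rewrite cos_2a_sin in H. nra. }
    apply sin_eq_0_0 in Hs as [k Hk]. exists k.
    apply (Rmult_eq_reg_l PI); lra.
  - intros [k ->]. replace (2 * PI * IZR k) with (2 * (IZR k * PI)) by ring.
    rewrite cos_2a_sin, sin_eq_0_1 by (now exists k). ring.
Qed.

Lemma cos_2PI_eq_m1 (s : R) : cos (2 * PI * s) = -1 <-> exists k : Z, s = 1/2 + IZR k.
Proof.
  replace (2 * PI * s) with (2 * PI * (s - 1/2) + PI) by field.
  rewrite neg_cos.
  assert (E : cos (2 * PI * (s - 1/2)) = 1 <-> exists k : Z, s = 1/2 + IZR k).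
  { rewrite cos_2PI_eq_1. split; intros [k Hk]; exists k; lra. }
  rewrite <- E. lra.
Qed.

Definition psi_poly (v z w : C) : C := ((v + z) * (v + z) - 1 + w * z * (v * z + 2))%C.

Lemma Psi_eq (alpha beta x : R) :
  Psi alpha beta x =
  (psi_poly (RtoC (4 * (1 - x))) (cexpi (-2 * PI * alpha)) (cexpi (-2 * PI * beta))
   / 16)%C.
Proof.
  unfold Psi.
  replace (- 2 * PI * (2 * alpha + beta))
    with (-2 * PI * alpha + -2 * PI * alpha + -2 * PI * beta) by ring.
  replace (- 4 * PI * alpha) with (-2 * PI * alpha + -2 * PI * alpha) by ring.
  replace (- 2 * PI * (alpha + beta)) with (-2 * PI * alpha + -2 * PI * beta) by ring.
  rewrite !cexpi_add.
  destruct (cexpi (-2 * PI * alpha)) as [a b], (cexpi (-2 * PI * beta)) as [c d].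
  unfold psi_poly, Cplus, Cminus, Copp, Cmult, Cdiv, Cinv, RtoC.
  apply injective_projections; simpl; field.
Qed.

Lemma psi_poly_conj (v : R) (z w : C) :
  Cconj (psi_poly v z w) = psi_poly v (Cconj z) (Cconj w).
Proof.
  destruct z as [a b], w as [c d].
  unfold psi_poly, Cconj, Cplus, Cminus, Copp, Cmult, RtoC; simpl. f_equal; ring.
Qed.

(* With P, Q as in the header, the right-hand side is P Pbar - Q Qbar when z, w
   are unimodular, since conjugation then inverts z and w. *)
Lemma psi_poly_norm_identity (v : R) (z w : C) : z <> 0 -> w <> 0 ->
  ((v - 1) * (v + 1) * ((v + (z + / z)) * (v + (z + / z))))%C =
  (psi_poly v z w * ((v + / z) * (v + / z) - 1)
   - w * z * (v * z + 2) * psi_poly v (/ z) (/ w))%C.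
Proof. intros Hz Hw. unfold psi_poly. field. auto. Qed.

Lemma psi_poly_at_1 (z w : C) : psi_poly 1 z w = (z * (z + 2) * (1 + w))%C.
Proof. unfold psi_poly. ring. Qed.

Lemma psi_poly_at_m1 (z w : C) : psi_poly (- 1)%C z w = (z * (z - 2) * (1 - w))%C.
Proof. unfold psi_poly. ring. Qed.

Lemma psi_poly_at_center (z w : C) : z <> 0 ->
  psi_poly (- (z + / z)) z w = ((1 - z * z) * (1 + z * z * z * w) / (z * z))%C.
Proof. intro Hz. unfold psi_poly. field. auto. Qed.

Lemma psi_poly_unit_real_root (v a b : R) :
  psi_poly v (cexpi a) (cexpi b) = 0 -> v = 1 \/ v = -1 \/ v = -2 * cos a.
Proof.
  intro H.
  assert (Hconj : psi_poly v (/ cexpi a) (/ cexpi b) = 0).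
  { rewrite <- !cexpi_conj, <- psi_poly_conj, H. apply injective_projections; simpl; ring. }
  assert (E : ((v - 1) * (v + 1)
               * ((v + (cexpi a + / cexpi a)) * (v + (cexpi a + / cexpi a))))%C = 0).
  { rewrite (psi_poly_norm_identity v (cexpi a) (cexpi b)), H, Hconj by apply cexpi_neq_0.
    ring. }
  rewrite cexpi_add_inv in E.
  apply Cmult_integral in E as [E | E]; [apply Cmult_integral in E as [E | E] |
    apply Cmult_integral in E as [E | E]]; apply (f_equal fst) in E; simpl in E; lra.
Qed.

Lemma psi_poly_at_1_eq_0 (a b : R) :
  psi_poly 1 (cexpi a) (cexpi b) = 0 <-> cexpi b = (- 1)%C.
Proof.
  rewrite psi_poly_at_1. split.
  - intro H. apply Cmult_eq_0_r in H.
    + transitivity ((1 + cexpi b) - 1)%C; [ring | rewrite H; ring].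
    + apply Cmult_neq_0; [apply cexpi_neq_0|].
      intro E. apply (f_equal fst) in E. simpl in E. pose proof (COS_bound a). lra.
  - intros ->. ring.
Qed.

Lemma psi_poly_at_m1_eq_0 (a b : R) :
  psi_poly (- 1)%C (cexpi a) (cexpi b) = 0 <-> cexpi b = 1.
Proof.
  rewrite psi_poly_at_m1. split.
  - intro H. apply Cmult_eq_0_r in H.
    + transitivity (1 - (1 - cexpi b))%C; [ring | rewrite H; ring].
    + apply Cmult_neq_0; [apply cexpi_neq_0|].
      intro E. apply (f_equal fst) in E. simpl in E. pose proof (COS_bound a). lra.
  - intros ->. ring.
Qed.

Lemma psi_poly_at_center_eq_0 (a b : R) :
  psi_poly (RtoC (-2 * cos a)) (cexpi a) (cexpi b) = 0 <->
  cexpi (2 * a) = 1 \/ cexpi (3 * a + b) = (- 1)%C.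
Proof.
  assert (Hv : RtoC (-2 * cos a) = (- (cexpi a + / cexpi a))%C).
  { rewrite cexpi_add_inv. apply injective_projections; simpl; ring. }
  rewrite Hv, psi_poly_at_center by apply cexpi_neq_0.
  replace (2 * a) with (a + a) by ring.
  replace (3 * a + b) with (a + a + a + b) by ring.
  rewrite !cexpi_add.
  pose proof (cexpi_neq_0 a) as Hz.
  set (z := cexpi a) in *. set (w := cexpi b).
  split.
  - intro H.
    assert (H' : ((1 - z * z) * (1 + z * z * z * w))%C = 0).
    { transitivity ((1 - z * z) * (1 + z * z * z * w) / (z * z) * (z * z))%C.
      - field. exact Hz.
      - rewrite H. ring. }
    apply Cmult_integral in H' as [E | E]; [left | right].
    + transitivity (1 - (1 - z * z))%C; [ring | rewrite E; ring].
    + transitivity ((1 + z * z * z * w) - 1)%C; [ring | rewrite E; ring].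
  - intros [E | E]; rewrite E; field; exact Hz.
Qed.

Lemma psi_poly_unit_eq_0 (v a b : R) :
  psi_poly v (cexpi a) (cexpi b) = 0 <->
  (v = 1 /\ cexpi b = (- 1)%C) \/ (v = -1 /\ cexpi b = 1) \/
  (v = -2 * cos a /\ (cexpi (2 * a) = 1 \/ cexpi (3 * a + b) = (- 1)%C)).
Proof.
  rewrite <- psi_poly_at_1_eq_0 with (a := a), <- psi_poly_at_m1_eq_0 with (a := a),
    <- psi_poly_at_center_eq_0.
  split.
  - intro H. destruct (psi_poly_unit_real_root v a b H) as [-> | [-> | ->]]; auto.
  - intros [[-> H] | [[-> H] | [-> H]]]; auto.
Qed.

Lemma Psi_eq_0 (alpha beta x : R) :
  Psi alpha beta x = 0 <->
  (x = 3/4 /\ cos (2 * PI * beta) = -1) \/ (x = 5/4 /\ cos (2 * PI * beta) = 1) \/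
  (x = 1 + 1/2 * cos (2 * PI * alpha) /\
   ((exists k : Z, 2 * alpha = IZR k) \/ (exists k : Z, 3 * alpha + beta = 1/2 + IZR k))).
Proof.
  assert (Hdiv : forall u : C, (u / 16)%C = 0 <-> u = 0).
  { intro u. split; intro H.
    - transitivity (u / 16 * 16)%C; [field | rewrite H; ring].
    - rewrite H. field. }
  rewrite Psi_eq, Hdiv, psi_poly_unit_eq_0, !cexpi_eq_1, !cexpi_eq_m1.
  replace (-2 * PI * alpha) with (- (2 * PI * alpha)) by ring.
  replace (-2 * PI * beta) with (- (2 * PI * beta)) by ring.
  replace (2 * - (2 * PI * alpha)) with (- (2 * PI * (2 * alpha))) by ring.
  replace (3 * - (2 * PI * alpha) + - (2 * PI * beta)) with
    (- (2 * PI * (3 * alpha + beta))) by ring.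
  rewrite !cos_neg, !cos_2PI_eq_1, !cos_2PI_eq_m1.
  assert (X1 : 4 * (1 - x) = 1 <-> x = 3/4) by lra.
  assert (X2 : 4 * (1 - x) = -1 <-> x = 5/4) by lra.
  assert (X3 : 4 * (1 - x) = -2 * cos (2 * PI * alpha) <->
               x = 1 + 1/2 * cos (2 * PI * alpha)) by lra.
  now rewrite X1, X2, X3.
Qed.

Lemma twice_is_integer_iff (alpha : R) : 0 <= alpha < 1 ->
  (exists k : Z, 2 * alpha = IZR k) <-> alpha = 0 \/ alpha = 1/2.
Proof.
  intro Ha. split.
  - intros [k Hk].
    assert (k = 0 \/ k = 1)%Z as [-> | ->].
    { assert (0 <= k)%Z by (apply le_IZR; lra).
      assert (k < 2)%Z by (apply lt_IZR; lra). lia. }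
    + left. simpl in Hk. lra.
    + right. simpl in Hk. lra.
  - intros [-> | ->]; [exists 0%Z | exists 1%Z]; simpl; lra.
Qed.

Lemma Psi_eq_0_unit_interval (alpha beta x : R) : 0 <= alpha < 1 ->
  Psi alpha beta x = 0 <->
  (x = 3/4 /\ cos (2 * PI * beta) = -1) \/ (x = 5/4 /\ cos (2 * PI * beta) = 1) \/
  (alpha = 0 /\ x = 3/2) \/ (alpha = 1/2 /\ x = 1/2) \/
  ((exists k : Z, 3 * alpha + beta = 1/2 + IZR k) /\ x = 1 + 1/2 * cos (2 * PI * alpha)).
Proof.
  intro Ha. rewrite Psi_eq_0, (twice_is_integer_iff alpha Ha).
  assert (C0 : cos (2 * PI * 0) = 1) by (rewrite Rmult_0_r; apply cos_0).
  assert (C1 : cos (2 * PI * (1/2)) = -1)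
    by (replace (2 * PI * (1/2)) with PI by field; apply cos_PI).
  split.
  - intros [H | [H | [Hx [[-> | ->] | Hk]]]]; try tauto.
    + rewrite C0 in Hx. right; right; left. split; [reflexivity | lra].
    + rewrite C1 in Hx. right; right; right; left. split; [reflexivity | lra].
  - intros [H | [H | [[-> ->] | [[-> ->] | H]]]]; try tauto.
    + right; right. split; [rewrite C0; lra | auto].
    + right; right. split; [rewrite C1; lra | auto].
Qed.

Lemma cos_3a (t : R) : cos (3 * t) = 4 * cos t ^ 3 - 3 * cos t.
Proof.
  replace (3 * t) with (t + t + t) by ring.
  rewrite !cos_plus, !sin_plus.
  pose proof (sin2_cos2 t) as E. unfold Rsqr in E.
  transitivity (cos t ^ 3 - 3 * cos t * (sin t * sin t)); [ring|].
  replace (sin t * sin t) with (1 - cos t * cos t) by lra. ring.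
Qed.

Lemma chebyshev3_factor (theta t : R) :
  4 * t ^ 3 - 3 * t - cos (3 * theta) =
  4 * (t - cos theta)
    * (t - (- cos theta - sqrt 3 * sin theta) / 2)
    * (t - (- cos theta + sqrt 3 * sin theta) / 2).
Proof.
  rewrite cos_3a.
  pose proof (sin2_cos2 theta) as E. unfold Rsqr in E.
  assert (S3 : sqrt 3 * sqrt 3 = 3) by (apply sqrt_sqrt; lra).
  transitivity (4 * (t - cos theta) * ((t + cos theta / 2) ^ 2
                  - sqrt 3 * sqrt 3 / 4 * (1 - cos theta * cos theta))).
  - rewrite S3. field.
  - replace (1 - cos theta * cos theta) with (sin theta * sin theta) by lra. field.
Qed.

Lemma Dfun_factor (beta : R) :
  exists r1 r2 r3 : R, forall x : R, Dfun beta x = - ((x - r1) * (x - r2) * (x - r3)).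
Proof.
  set (theta := (2 * PI * beta + PI) / 3).
  assert (Hc : cos (3 * theta) = - cos (2 * PI * beta)).
  { unfold theta.
    replace (3 * ((2 * PI * beta + PI) / 3)) with (2 * PI * beta + PI) by field.
    apply neg_cos. }
  exists (1 + cos theta / 2),
    (1 + (- cos theta - sqrt 3 * sin theta) / 4),
    (1 + (- cos theta + sqrt 3 * sin theta) / 4).
  intro x.
  transitivity (- (4 * (2 * (x - 1)) ^ 3 - 3 * (2 * (x - 1)) - cos (3 * theta)) / 32).
  - rewrite Hc. unfold Dfun. field.
  - rewrite chebyshev3_factor. field.
Qed.

Theorem proposition4p4 (alpha beta : R)
  (Ha : 0 <= alpha < 1) (Hb : 0 <= beta < 1) :
  (* D(beta, .) has three real zeros (counted with multiplicity) *)
  (exists r1 r2 r3 : R, forall x : R,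
      Dfun beta x = - ((x - r1) * (x - r2) * (x - r3))) /\
  (* and E(alpha, beta) consists exactly of those zeros plus the listed values *)
  (forall x : R,
      Eset alpha beta x <->
      (Dfun beta x = 0
       \/ (alpha = 0 /\ x = 3 / 2)
       \/ (alpha = 1 / 2 /\ x = 1 / 2)
       \/ ((exists k : Z, 3 * alpha + beta = 1 / 2 + IZR k)
           /\ x = 1 + 1 / 2 * cos (2 * PI * alpha)))).
Proof.
  split; [apply Dfun_factor |].
  intro x. unfold Eset. rewrite (Psi_eq_0_unit_interval alpha beta x Ha).
  assert (D34 : cos (2 * PI * beta) = -1 -> Dfun beta (3/4) = 0)
    by (intro Hc; unfold Dfun; rewrite Hc; field).
  assert (D54 : cos (2 * PI * beta) = 1 -> Dfun beta (5/4) = 0)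
    by (intro Hc; unfold Dfun; rewrite Hc; field).
  split.
  - intros [HD | [[-> Hc] | [[-> Hc] | H]]]; auto.
  - tauto.
Qed.
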